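(* Let $H$ be as in the context. Then, as $p\to0$, \[ H(p)\sim(\sigma p)^{2/\mu}\left(2\Gamma(1-\mu)\right)^{-1/\mu}. \]
   Context: Fix $\mu\in(0,1)$, $\sigma>0$. Let $\Phi(a)=\mu(1+a)^{-1-\mu}$ for $a\ge0$ and $\omega(z)=\frac{1}{\sigma\sqrt{2\pi}}e^{-z^2/(2\sigma^2)}$ (a Gaussian of variance $\sigma^2$). For $p\in\mathbb{R}$, $H(p)\ge0$ is the unique solution of $\int_0^\infty\Phi(a)e^{-aH(p)}\,\mathrm{d}a\cdot\int_{\mathbb{R}}\omega(z)e^{zp}\,\mathrm{d}z=1$. $\Gamma$ denotes the Gamma function. *)

From Stdlib Require Import Reals.
From Coquelicot Require Import Coquelicot.
Open Scope R_scope.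

Definition Gamma (x : R) : R :=
  RInt_gen (fun t => Rpower t (x - 1) * exp (- t)) (at_right 0) (Rbar_locally p_infty).

Definition Phi (mu a : R) : R := mu * Rpower (1 + a) (- 1 - mu).

Definition omega (sigma z : R) : R :=
  / (sigma * sqrt (2 * PI)) * exp (- z ^ 2 / (2 * sigma ^ 2)).

(* h is a (nonnegative) solution of the defining equation for H(p):
   (int_0^oo Phi(a) e^{-a h} da) * (int_R omega(z) e^{z p} dz) = 1 *)
Definition H_equation (mu sigma p h : R) : Prop :=
  0 <= h /\
  exists I1 I2 : R,
    is_RInt_gen (fun a => Phi mu a * exp (- (a * h))) (at_point 0) (Rbar_locally p_infty) I1 /\
    is_RInt_gen (fun z => omega sigma z * exp (z * p)) (Rbar_locally m_infty) (Rbar_locally p_infty) I2 /\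
    I1 * I2 = 1.

From Stdlib Require Import Reals Lra Classical.
From Coquelicot Require Import Coquelicot.
Open Scope R_scope.

(* The Gaussian factor of the equation is exp (sigma^2 p^2 / 2): complete the square and use
   int e^(-x^2) = sqrt PI, which follows from Feynman's trick (the function
   (int_0^x e^(-t^2))^2 + int_0^1 e^(-x^2 (1+t^2)) / (1+t^2) dt is constant).
   Integrating by parts and substituting s = h (1 + a), the Laplace transform of Phi at h is
   1 - h^mu e^h Gamma(1-mu, h), with Gamma(1-mu, h) = int_h^oo s^(-mu) e^(-s) ds the upper
   incomplete Gamma function.  Hence h = H(p) solves h^mu e^h Gamma(1-mu, h) = 1 - e^(-x) with
   x = sigma^2 p^2 / 2.  The left side is at least (h/(h+1))^mu (1 - 1/e), so h -> 0 as p -> 0;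
   then e^h -> 1, Gamma(1-mu, h) -> Gamma(1-mu) (the missing part int_0^h is at most
   h^(1-mu)/(1-mu)) and (1 - e^(-x))/x -> 1, so h^mu * 2 Gamma(1-mu) / (sigma p)^2 -> 1. *)

(* Coquelicot's lemmas at the real normed module, so that unification need not guess it *)
Local Notation ex_derive_continuous_R := (@ex_derive_continuous R_AbsRing R_NormedModule).
Local Notation ex_RInt_continuous_R := (@ex_RInt_continuous R_CompleteNormedModule).

Lemma exp_le_compat (a b : R) : a <= b -> exp a <= exp b.
Proof. intros [Hab | ->]; [apply Rlt_le, exp_increasing, Hab | apply Rle_refl]. Qed.

Lemma exp_opp_le_1 (x : R) : 0 <= x -> exp (- x) <= 1.
Proof. intros Hx. rewrite <- exp_0. apply exp_le_compat. lra. Qed.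

Lemma exp_opp_lt_1 (x : R) : 0 < x -> exp (- x) < 1.
Proof. intros Hx. rewrite <- exp_0. apply exp_increasing. lra. Qed.

(** * Improper integrals *)

Section ImproperIntegrals.

Context {Fa Fb : (R -> Prop) -> Prop}.

Lemma is_RInt_gen_of_approx {FFa : Filter Fa} {FFb : Filter Fb} (f : R -> R) (l : R) :
  (forall eps, 0 < eps -> filter_prod Fa Fb
     (fun ab => exists y, is_RInt f (fst ab) (snd ab) y /\ Rabs (y - l) < eps)) ->
  is_RInt_gen f Fa Fb l.
Proof.
  intros Happrox P [eps Heps].
  unfold filtermapi. generalize (Happrox eps (cond_pos eps)). apply filter_imp.
  intros ab [y [Hy Hyl]]. exists y. split; [exact Hy | apply Heps; exact Hyl].
Qed.

Lemma is_RInt_gen_approx_in {FFa : ProperFilter Fa} {FFb : ProperFilter Fb}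
    (f : R -> R) (P : R -> Prop) (l : R) :
  filter_prod Fa Fb (fun ab => forall y, is_RInt f (fst ab) (snd ab) y -> P y) ->
  is_RInt_gen f Fa Fb l ->
  forall eps, 0 < eps -> exists y, P y /\ Rabs (y - l) < eps.
Proof.
  intros HP Hf eps Heps.
  assert (Hl : locally l (ball l (mkposreal eps Heps))) by (exists (mkposreal eps Heps); auto).
  destruct (filter_ex _ (filter_and _ _ HP (Hf _ Hl))) as [ab [HPab [y [Hy Hball]]]].
  exists y. split; [exact (HPab y Hy) | exact Hball].
Qed.

Lemma is_RInt_gen_ge {FFa : ProperFilter Fa} {FFb : ProperFilter Fb} (f : R -> R) (m l : R) :
  filter_prod Fa Fb (fun ab => forall y, is_RInt f (fst ab) (snd ab) y -> m <= y) ->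
  is_RInt_gen f Fa Fb l -> m <= l.
Proof.
  intros Hm Hf. apply Rle_plus_epsilon. intros eps Heps.
  destruct (is_RInt_gen_approx_in f _ l Hm Hf eps Heps) as [y [Hy Hyl]].
  apply Rabs_lt_between in Hyl. lra.
Qed.

Lemma is_RInt_gen_le {FFa : ProperFilter Fa} {FFb : ProperFilter Fb} (f : R -> R) (M l : R) :
  filter_prod Fa Fb (fun ab => forall y, is_RInt f (fst ab) (snd ab) y -> y <= M) ->
  is_RInt_gen f Fa Fb l -> l <= M.
Proof.
  intros HM Hf. apply Rle_plus_epsilon. intros eps Heps.
  destruct (is_RInt_gen_approx_in f _ l HM Hf eps Heps) as [y [Hy Hyl]].
  apply Rabs_lt_between in Hyl. lra.
Qed.

Lemma is_RInt_gen_R_unique {FFa : ProperFilter' Fa} {FFb : ProperFilter' Fb} (f : R -> R) (l1 l2 : R) :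
  is_RInt_gen f Fa Fb l1 -> is_RInt_gen f Fa Fb l2 -> l1 = l2.
Proof.
  intros H1 H2. rewrite <- (is_RInt_gen_unique (V := R_CompleteNormedModule) _ _ H1).
  exact (is_RInt_gen_unique (V := R_CompleteNormedModule) _ _ H2).
Qed.

Context {Ga Gb : (R -> Prop) -> Prop}.

Lemma is_RInt_gen_comp_lin {FGa : Filter Ga} {FGb : Filter Gb} (f : R -> R) (u v l : R) :
  filterlim (fun z => u * z + v) Ga Fa -> filterlim (fun z => u * z + v) Gb Fb ->
  is_RInt_gen f Fa Fb l -> is_RInt_gen (fun z => u * f (u * z + v)) Ga Gb l.
Proof.
  intros Hla Hlb Hf P HP.
  destruct (Hf P HP) as [Q R HQ HR HQR].
  apply Filter_prod with (fun a => Q (u * a + v)) (fun b => R (u * b + v)).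
  - exact (Hla Q HQ).
  - exact (Hlb R HR).
  - intros a b Ha Hb. destruct (HQR _ _ Ha Hb) as [y [Hy HPy]].
    exists y. split; [exact (is_RInt_comp_lin f u v a b y Hy) | exact HPy].
Qed.

End ImproperIntegrals.

Lemma filterlim_affine_p_infty (u v : R) :
  0 < u -> filterlim (fun z => u * z + v) (Rbar_locally p_infty) (Rbar_locally p_infty).
Proof.
  intros Hu P [M HM]. exists ((M - v) / u). intros z Hz. apply HM.
  apply (Rmult_lt_compat_l u) in Hz; [|exact Hu].
  replace (u * ((M - v) / u)) with (M - v) in Hz by (field; lra). lra.
Qed.

Lemma filterlim_affine_m_infty (u v : R) :
  0 < u -> filterlim (fun z => u * z + v) (Rbar_locally m_infty) (Rbar_locally m_infty).
Proof.
  intros Hu P [M HM]. exists ((M - v) / u). intros z Hz. apply HM.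
  apply (Rmult_lt_compat_l u) in Hz; [|exact Hu].
  replace (u * ((M - v) / u)) with (M - v) in Hz by (field; lra). lra.
Qed.

Lemma filterlim_affine_at_point (u v a : R) :
  filterlim (fun z => u * z + v) (at_point a) (at_point (u * a + v)).
Proof. intros P HP. unfold filtermap, at_point in *. exact HP. Qed.

Lemma bounded_sup_approx (E : R -> Prop) :
  bound E -> (exists y, E y) ->
  exists L, (forall y, E y -> y <= L) /\ (forall eps, 0 < eps -> exists y, E y /\ L - eps < y).
Proof.
  intros Hb Hne. destruct (completeness E Hb Hne) as [L [HL1 HL2]].
  exists L. split; [exact HL1|]. intros eps Heps. apply NNPP. intros Hn.
  assert (L <= L - eps); [|lra].
  apply HL2. intros y Hy. apply Rnot_lt_le. intros Hlt. apply Hn. exists y. split; [exact Hy | lra].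
Qed.

Lemma ex_RInt_gen_p_infty_nonneg (f : R -> R) (a K : R) :
  (forall b, a <= b -> ex_RInt f a b) -> (forall x, a <= x -> 0 <= f x) ->
  (forall b, a <= b -> RInt f a b <= K) ->
  ex_RInt_gen f (at_point a) (Rbar_locally p_infty).
Proof.
  intros Hex Hpos HK.
  assert (Hmono : forall b b', a <= b <= b' -> RInt f a b <= RInt f a b').
  { intros b b' Hb.
    rewrite <- (RInt_Chasles (V := R_CompleteNormedModule) f a b b');
      [| apply Hex; lra | apply (ex_RInt_Chasles_2 f a); [lra | apply Hex; lra]].
    assert (0 <= RInt f b b'); [|unfold plus; simpl; lra].
    apply RInt_ge_0; [lra | apply (ex_RInt_Chasles_2 f a); [lra | apply Hex; lra] |].
    intros x Hx. apply Hpos. lra. }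
  destruct (bounded_sup_approx (fun y => exists b, a <= b /\ y = RInt f a b)) as [L [HL1 HL2]].
  { exists K. intros y [b [Hb ->]]. apply HK, Hb. }
  { exists (RInt f a a), a. split; [lra | reflexivity]. }
  exists L. apply is_RInt_gen_of_approx. intros eps Heps.
  destruct (HL2 eps Heps) as [y [[b0 [Hb0 ->]] Hy]].
  apply Filter_prod with (fun x => x = a) (fun b => b0 < b); [reflexivity | exists b0; auto |].
  intros x b -> Hb. exists (RInt f a b).
  split; [apply (RInt_correct (V := R_CompleteNormedModule)), Hex; lra |].
  assert (RInt f a b0 <= RInt f a b) by (apply Hmono; lra).
  assert (RInt f a b <= L) by (apply HL1; exists b; split; [lra | reflexivity]).
  apply Rabs_lt_between. lra.
Qed.

Lemma ex_RInt_gen_at_right_nonneg (f : R -> R) (c b K : R) :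
  c < b -> (forall a, c < a <= b -> ex_RInt f a b) -> (forall x, c < x -> 0 <= f x) ->
  (forall a, c < a <= b -> RInt f a b <= K) ->
  ex_RInt_gen f (at_right c) (at_point b).
Proof.
  intros Hcb Hex Hpos HK.
  assert (Hmono : forall a a', c < a <= a' -> a' <= b -> RInt f a' b <= RInt f a b).
  { intros a a' Ha Ha'.
    rewrite <- (RInt_Chasles (V := R_CompleteNormedModule) f a a' b);
      [| apply (ex_RInt_Chasles_1 f a a' b); [lra | apply Hex; lra] | apply Hex; lra].
    assert (0 <= RInt f a a'); [|unfold plus; simpl; lra].
    apply RInt_ge_0; [lra | apply (ex_RInt_Chasles_1 f a a' b); [lra | apply Hex; lra] |].
    intros x Hx. apply Hpos. lra. }
  destruct (bounded_sup_approx (fun y => exists a, c < a <= b /\ y = RInt f a b)) as [L [HL1 HL2]].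
  { exists K. intros y [a [Ha ->]]. apply HK, Ha. }
  { exists (RInt f b b), b. split; [lra | reflexivity]. }
  exists L. apply is_RInt_gen_of_approx. intros eps Heps.
  destruct (HL2 eps Heps) as [y [[a0 [Ha0 ->]] Hy]].
  apply Filter_prod with (fun x => c < x < a0) (fun y => y = b); [| reflexivity |].
  { assert (Hd : 0 < a0 - c) by lra. exists (mkposreal _ Hd). intros x Hx Hcx.
    change (Rabs (x - c) < a0 - c) in Hx. apply Rabs_lt_between in Hx. lra. }
  intros a x Ha ->. exists (RInt f a b).
  split; [apply (RInt_correct (V := R_CompleteNormedModule)), Hex; lra |].
  assert (RInt f a0 b <= RInt f a b) by (apply Hmono; lra).
  assert (RInt f a b <= L) by (apply HL1; exists a; split; [lra | reflexivity]).
  apply Rabs_lt_between. lra.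
Qed.

(** * The Gaussian integral *)

Definition gauss (x : R) : R := exp (- (x * x)).

Lemma continuous_gauss (x : R) : continuous gauss x.
Proof. apply ex_derive_continuous_R. unfold gauss. auto_derive. exact I. Qed.

Lemma ex_RInt_gauss (a b : R) : ex_RInt gauss a b.
Proof. apply ex_RInt_continuous_R. intros x _. apply continuous_gauss. Qed.

Definition gauss_int (x : R) : R := RInt gauss 0 x.

Lemma is_derive_gauss_int (x : R) : is_derive gauss_int x (gauss x).
Proof.
  apply is_derive_RInt with (a := 0).
  - exists (mkposreal 1 Rlt_0_1). intros y _.
    apply (RInt_correct (V := R_CompleteNormedModule)), ex_RInt_gauss.
  - apply continuous_gauss.
Qed.

Lemma gauss_int_ge0 (x : R) : 0 <= x -> 0 <= gauss_int x.
Proof. intros Hx. apply RInt_ge_0; [exact Hx | apply ex_RInt_gauss | intros; apply Rlt_le, exp_pos]. Qed.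

Lemma gauss_int_opp (x : R) : gauss_int (- x) = - gauss_int x.
Proof.
  unfold gauss_int.
  replace (RInt gauss 0 (- x)) with (RInt gauss (-1 * 0 + 0) (-1 * x + 0)) by (f_equal; ring).
  rewrite <- (RInt_comp_lin (V := R_CompleteNormedModule) gauss (-1) 0 0 x) by apply ex_RInt_gauss.
  rewrite (RInt_ext _ (fun y => opp (gauss y))).
  2:{ intros y _. unfold gauss, scal, opp; simpl; unfold mult; simpl.
      replace ((-1 * y + 0) * (-1 * y + 0)) with (y * y) by ring. ring. }
  rewrite (RInt_opp (V := R_CompleteNormedModule)) by apply ex_RInt_gauss. reflexivity.
Qed.

Lemma gauss_le_inv (x : R) : 1 <= x -> gauss x <= / x.
Proof.
  intros Hx. unfold gauss. rewrite exp_Ropp. apply Rinv_le_contravar; [lra|].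
  assert (H := exp_ineq1 (x * x)). nra.
Qed.

Lemma one_plus_sqr_pos (t : R) : 0 < 1 + t * t.
Proof. nra. Qed.

Definition feynman_kernel (u t : R) : R := exp (- (u * u * (1 + t * t))) / (1 + t * t).

Definition feynman (x : R) : R := RInt (feynman_kernel x) 0 1.

Lemma is_derive_feynman_kernel (u t : R) :
  is_derive (fun z => feynman_kernel z t) u (- 2 * u * exp (- (u * u * (1 + t * t)))).
Proof.
  unfold feynman_kernel. assert (Ht := one_plus_sqr_pos t).
  auto_derive; [lra | field; lra].
Qed.

Lemma ex_RInt_feynman_kernel (u a b : R) : ex_RInt (feynman_kernel u) a b.
Proof.
  apply ex_RInt_continuous_R. intros t _. apply ex_derive_continuous_R.
  unfold feynman_kernel. assert (Ht := one_plus_sqr_pos t). auto_derive. lra.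
Qed.

Lemma is_derive_feynman (x : R) : is_derive feynman x (- 2 * gauss x * gauss_int x).
Proof.
  replace (- 2 * gauss x * gauss_int x)
    with (RInt (fun t => Derive (fun u => feynman_kernel u t) x) 0 1).
  - apply is_derive_RInt_param.
    + exists (mkposreal 1 Rlt_0_1). intros y _ t _. eexists. apply is_derive_feynman_kernel.
    + intros t _.
      apply continuity_2d_pt_ext with (fun u v => - 2 * u * exp (- (u * u * (1 + v * v)))).
      { intros u v. symmetry. apply is_derive_unique, is_derive_feynman_kernel. }
      apply continuity_2d_pt_mult.
      * apply continuity_2d_pt_mult; [apply continuity_2d_pt_const | apply continuity_2d_pt_id1].
      * apply continuity_1d_2d_pt_comp with (f := exp) (g := fun u v => - (u * u * (1 + v * v))).
        { apply derivable_continuous_pt, derivable_pt_exp. }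
        repeat first [ apply continuity_2d_pt_opp | apply continuity_2d_pt_mult
                     | apply continuity_2d_pt_plus | apply continuity_2d_pt_const
                     | apply continuity_2d_pt_id1 | apply continuity_2d_pt_id2 ].
    + exists (mkposreal 1 Rlt_0_1). intros y _. apply ex_RInt_feynman_kernel.
  - (* the substitution s = x t turns the derivative into a multiple of [gauss_int x] *)
    rewrite (RInt_ext _ (fun t => scal (- 2 * gauss x) (scal x (gauss (x * t + 0))))).
    2:{ intros t _. erewrite is_derive_unique; [|apply is_derive_feynman_kernel].
        unfold scal; simpl; unfold mult; simpl. unfold gauss.
        replace (- (x * x * (1 + t * t))) with (- (x * x) + - ((x * t + 0) * (x * t + 0))) by ring.
        rewrite exp_plus. ring. }
    rewrite (RInt_scal (V := R_CompleteNormedModule)).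
    2:{ apply ex_RInt_continuous_R. intros z _. apply ex_derive_continuous_R.
        unfold gauss, scal; simpl; unfold mult; simpl. auto_derive. exact I. }
    rewrite (RInt_comp_lin (V := R_CompleteNormedModule)) by apply ex_RInt_gauss.
    unfold gauss_int, scal; simpl; unfold mult; simpl.
    replace (x * 0 + 0) with 0 by ring. replace (x * 1 + 0) with x by ring. reflexivity.
Qed.

Lemma gauss_int_sqr_plus_feynman (x : R) : gauss_int x * gauss_int x + feynman x = PI / 4.
Proof.
  set (V := fun y => gauss_int y * gauss_int y + feynman y).
  assert (HV : forall y, is_derive V y 0).
  { intros y. replace 0 with (gauss y * gauss_int y + gauss_int y * gauss y
                               + (- 2 * gauss y * gauss_int y)) by ring.
    apply @is_derive_plus; [|apply is_derive_feynman].
    apply @is_derive_mult; try apply is_derive_gauss_int.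
    intros; simpl; unfold mult; simpl; ring. }
  assert (HV0 : V 0 = PI / 4).
  { unfold V, gauss_int, feynman. rewrite RInt_point.
    rewrite (RInt_ext _ (fun t => / (1 + t * t))).
    2:{ intros t _. unfold feynman_kernel. replace (- (0 * 0 * (1 + t * t))) with 0 by ring.
        rewrite exp_0. apply Rmult_1_l. }
    rewrite (is_RInt_unique _ 0 1 (atan 1 - atan 0)).
    { rewrite atan_1, atan_0. unfold zero; simpl. ring. }
    apply (is_RInt_derive atan).
    - intros z _. apply is_derive_atan.
    - intros z _. apply ex_derive_continuous_R.
      assert (Hz := one_plus_sqr_pos z). auto_derive. lra. }
  fold (V x). rewrite <- HV0.
  destruct (Req_dec x 0) as [-> | Hx]; [reflexivity|].
  destruct (MVT_gen V 0 x (fun _ => 0)) as [c [_ Hc]]; [intros; apply HV| |lra].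
  intros y _. apply continuity_pt_filterlim, ex_derive_continuous_R. eexists. apply HV.
Qed.

Lemma feynman_bounds (x : R) : 0 <= feynman x <= gauss x.
Proof.
  split.
  - apply RInt_ge_0; [lra | apply ex_RInt_feynman_kernel |]. intros t _.
    apply Rlt_le, Rdiv_lt_0_compat; [apply exp_pos | apply one_plus_sqr_pos].
  - unfold feynman. replace (gauss x) with (RInt (fun _ => gauss x) 0 1).
    2:{ rewrite RInt_const. unfold scal; simpl; unfold mult; simpl. ring. }
    apply RInt_le; [lra | apply ex_RInt_feynman_kernel | apply ex_RInt_const |].
    intros t Ht. unfold feynman_kernel, gauss. assert (Hpos := one_plus_sqr_pos t).
    assert (Hexp : exp (- (x * x * (1 + t * t))) <= exp (- (x * x))).
    { apply exp_le_compat. assert (0 <= x * x * (t * t)) by (apply Rmult_le_pos; nra). nra. }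
    apply (Rmult_le_reg_r (1 + t * t)); [lra|].
    unfold Rdiv. rewrite Rmult_assoc, Rinv_l by lra.
    assert (0 <= exp (- (x * x)) * (t * t)) by (apply Rmult_le_pos; [apply Rlt_le, exp_pos | nra]).
    nra.
Qed.

Lemma gauss_int_approx (x : R) :
  0 <= x -> Rabs (gauss_int x - sqrt PI / 2) <= gauss x / (sqrt PI / 2).
Proof.
  intros Hx. set (r := sqrt PI / 2). set (S := gauss_int x).
  assert (Hr : 0 < r) by (assert (0 < sqrt PI) by apply sqrt_lt_R0, PI_RGT_0; unfold r; lra).
  assert (Hr2 : r * r = PI / 4).
  { unfold r. assert (H := sqrt_sqrt PI (Rlt_le _ _ PI_RGT_0)).
    replace (sqrt PI / 2 * (sqrt PI / 2)) with (sqrt PI * sqrt PI / 4) by field.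
    rewrite H. reflexivity. }
  assert (HS := gauss_int_ge0 x Hx). fold S in HS.
  assert (HF := feynman_bounds x). assert (HSF := gauss_int_sqr_plus_feynman x). fold S in HSF.
  (* |S - r| (S + r) = |S^2 - r^2| = feynman x *)
  assert (Habs : Rabs (S - r) * (S + r) = feynman x).
  { rewrite <- (Rabs_pos_eq (S + r)) by lra. rewrite <- Rabs_mult.
    replace ((S - r) * (S + r)) with (- feynman x) by nra.
    rewrite Rabs_Ropp. apply Rabs_pos_eq. lra. }
  apply (Rmult_le_reg_r (S + r)); [lra|]. rewrite Habs.
  assert (gauss x <= gauss x / r * (S + r)); [|lra].
  replace (gauss x / r * (S + r)) with (gauss x + gauss x / r * S) by (field; lra).
  assert (0 <= gauss x / r * S); [|lra].
  apply Rmult_le_pos; [apply Rdiv_le_0_compat; [apply Rlt_le, exp_pos | exact Hr] | exact HS].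
Qed.

Lemma is_RInt_gen_gauss :
  is_RInt_gen gauss (Rbar_locally m_infty) (Rbar_locally p_infty) (sqrt PI).
Proof.
  apply is_RInt_gen_of_approx. intros eps Heps. set (r := sqrt PI / 2).
  assert (Hr : 0 < r) by (assert (0 < sqrt PI) by apply sqrt_lt_R0, PI_RGT_0; unfold r; lra).
  set (M := 1 + 4 / (eps * r)).
  assert (HM : 0 < 4 / (eps * r)) by (apply Rdiv_lt_0_compat; [lra | apply Rmult_lt_0_compat; lra]).
  assert (Htail : forall y, M < y -> Rabs (gauss_int y - r) < eps / 2).
  { intros y Hy. eapply Rle_lt_trans; [apply gauss_int_approx; unfold M in Hy; lra|]. fold r.
    apply Rlt_div_l; [exact Hr|].
    eapply Rle_lt_trans; [apply gauss_le_inv; unfold M in Hy; lra|].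
    replace (eps / 2 * r) with (/ (2 / (eps * r))) by (field; lra).
    apply Rinv_lt_contravar; [apply Rmult_lt_0_compat; unfold M in Hy; lra|].
    unfold M in Hy. assert (0 < 2 / (eps * r)); [|lra].
    apply Rdiv_lt_0_compat; [lra | apply Rmult_lt_0_compat; lra]. }
  apply Filter_prod with (fun a => a < - M) (fun b => M < b); [exists (- M); auto | exists M; auto |].
  intros a b Ha Hb. exists (RInt gauss a b).
  split; [apply (RInt_correct (V := R_CompleteNormedModule)), ex_RInt_gauss|]. simpl.
  assert (Hab : RInt gauss a b = gauss_int b + gauss_int (- a)).
  { rewrite gauss_int_opp. unfold gauss_int.
    rewrite <- (RInt_Chasles (V := R_CompleteNormedModule) gauss a 0 b) by apply ex_RInt_gauss.
    rewrite <- (opp_RInt_swap (V := R_CompleteNormedModule)) by apply ex_RInt_gauss.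
    unfold plus, opp; simpl. ring. }
  rewrite Hab. replace (sqrt PI) with (r + r) by (unfold r; field).
  replace (gauss_int b + gauss_int (- a) - (r + r))
    with ((gauss_int b - r) + (gauss_int (- a) - r)) by ring.
  eapply Rle_lt_trans; [apply Rabs_triang|].
  assert (H1 := Htail b Hb). assert (H2 := Htail (- a) ltac:(lra)). lra.
Qed.

Lemma is_RInt_gen_omega_exp (sigma p : R) : 0 < sigma ->
  is_RInt_gen (fun z => omega sigma z * exp (z * p))
    (Rbar_locally m_infty) (Rbar_locally p_infty) (exp (sigma ^ 2 * p ^ 2 / 2)).
Proof.
  intros Hs.
  assert (Hs2 : sqrt 2 * sqrt 2 = 2) by (apply sqrt_sqrt; lra).
  assert (Hs2p : 0 < sqrt 2) by (apply sqrt_lt_R0; lra).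
  assert (Hpi : 0 < sqrt PI) by (apply sqrt_lt_R0, PI_RGT_0).
  assert (H2pi : sqrt (2 * PI) = sqrt 2 * sqrt PI) by (apply sqrt_mult; [lra | apply Rlt_le, PI_RGT_0]).
  (* completing the square: z p - z^2/(2 sigma^2) = sigma^2 p^2/2 - (u z + v)^2 *)
  set (u := / (sigma * sqrt 2)). set (v := - (sigma ^ 2 * p) * u).
  set (k := exp (sigma ^ 2 * p ^ 2 / 2) / sqrt PI).
  assert (Hu : 0 < u) by (apply Rinv_0_lt_compat, Rmult_lt_0_compat; lra).
  assert (Hu2 : u * u = / (2 * sigma ^ 2)).
  { unfold u. rewrite <- Rinv_mult. f_equal.
    replace (sigma * sqrt 2 * (sigma * sqrt 2)) with (sigma ^ 2 * (sqrt 2 * sqrt 2)) by ring.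
    rewrite Hs2. ring. }
  assert (Hpoint : forall z, omega sigma z * exp (z * p) = k * (u * gauss (u * z + v))).
  { intros z. unfold omega, gauss, k. rewrite H2pi.
    replace (- ((u * z + v) * (u * z + v))) with (- (u * u) * (z - sigma ^ 2 * p) ^ 2)
      by (unfold v; ring).
    rewrite Hu2.
    replace (- z ^ 2 / (2 * sigma ^ 2))
      with (- / (2 * sigma ^ 2) * (z - sigma ^ 2 * p) ^ 2 + - (z * p) + sigma ^ 2 * p ^ 2 / 2)
      by (field; lra).
    rewrite !exp_plus, exp_Ropp. unfold u. field.
    assert (exp (z * p) <> 0) by apply Rgt_not_eq, exp_pos. repeat split; lra. }
  assert (Hlin : is_RInt_gen (fun z => u * gauss (u * z + v))
                  (Rbar_locally m_infty) (Rbar_locally p_infty) (sqrt PI)).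
  { apply (is_RInt_gen_comp_lin (Fa := Rbar_locally m_infty) (Fb := Rbar_locally p_infty)).
    - apply filterlim_affine_m_infty, Hu.
    - apply filterlim_affine_p_infty, Hu.
    - apply is_RInt_gen_gauss. }
  apply (is_RInt_gen_scal (V := R_NormedModule) _ k) in Hlin.
  replace (exp (sigma ^ 2 * p ^ 2 / 2)) with (scal k (sqrt PI))
    by (unfold k, scal; simpl; unfold mult; simpl; field; lra).
  refine (is_RInt_gen_ext _ _ _ _ Hlin).
  apply filter_forall. intros ab z _. rewrite Hpoint. reflexivity.
Qed.

(** * The Gamma function *)

Lemma Rpower_pos (x c : R) : 0 < Rpower x c.
Proof. apply exp_pos. Qed.

Lemma Rpower_1_base (c : R) : Rpower 1 c = 1.
Proof. unfold Rpower. rewrite ln_1, Rmult_0_r. apply exp_0. Qed.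

Lemma is_derive_Rpower (c x : R) : 0 < x -> is_derive (fun t => Rpower t c) x (c * Rpower x (c - 1)).
Proof. intros Hx. apply is_derive_Reals, derivable_pt_lim_power, Hx. Qed.

Lemma continuous_Rpower (c x : R) : 0 < x -> continuous (fun t => Rpower t c) x.
Proof.
  intros Hx. apply ex_derive_continuous_R.
  eexists. apply is_derive_Rpower, Hx.
Qed.

Lemma Rpower_inv_base (x c : R) : 0 < x -> Rpower (/ x) c = / Rpower x c.
Proof. intros Hx. unfold Rpower. rewrite ln_Rinv, <- exp_Ropp by exact Hx. f_equal. ring. Qed.

Lemma Rpower_opp_le (s t mu : R) : 0 < s <= t -> 0 <= mu -> Rpower t (- mu) <= Rpower s (- mu).
Proof.
  intros Hst Hmu. rewrite !Rpower_Ropp. apply Rinv_le_contravar; [apply Rpower_pos |].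
  apply Rle_Rpower_l; assumption.
Qed.

Lemma Rpower_opp_le_1 (s mu : R) : 1 <= s -> 0 <= mu -> Rpower s (- mu) <= 1.
Proof. intros Hs Hmu. rewrite <- (Rpower_1_base (- mu)). apply Rpower_opp_le; lra. Qed.

Lemma Rpower_lt_near_0 (c eps : R) : 0 < c -> 0 < eps -> at_right 0 (fun h => Rpower h c < eps).
Proof.
  intros Hc Heps. assert (Hd := Rpower_pos eps (/ c)).
  exists (mkposreal _ Hd). intros h Hh Hh0.
  change (Rabs (h - 0) < Rpower eps (/ c)) in Hh. rewrite Rminus_0_r, Rabs_pos_eq in Hh by lra.
  replace eps with (Rpower (Rpower eps (/ c)) c).
  - apply Rlt_Rpower_l; lra.
  - rewrite Rpower_mult, Rinv_l, Rpower_1 by lra. reflexivity.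
Qed.

Lemma is_RInt_exp_opp (a b : R) : is_RInt (fun s => exp (- s)) a b (exp (- a) - exp (- b)).
Proof.
  replace (exp (- a) - exp (- b)) with (minus (- exp (- b)) (- exp (- a)))
    by (unfold minus, plus, opp; simpl; ring).
  apply (is_RInt_derive (V := R_CompleteNormedModule) (fun s => - exp (- s))).
  - intros x _. auto_derive; [exact I | ring].
  - intros x _. apply ex_derive_continuous_R. auto_derive. exact I.
Qed.

Lemma is_RInt_Rpower_opp (mu a b : R) : mu < 1 -> 0 < a -> 0 < b ->
  is_RInt (fun s => Rpower s (- mu)) a b ((Rpower b (1 - mu) - Rpower a (1 - mu)) / (1 - mu)).
Proof.
  intros Hmu Ha Hb.
  set (F := fun s => / (1 - mu) * Rpower s (1 - mu)).
  replace ((Rpower b (1 - mu) - Rpower a (1 - mu)) / (1 - mu)) with (minus (F b) (F a))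
    by (unfold minus, plus, opp, F; simpl; field; lra).
  assert (Hmin : 0 < Rmin a b) by (apply Rmin_glb_lt; assumption).
  apply (is_RInt_derive (V := R_CompleteNormedModule) F).
  - intros x Hx. unfold F.
    replace (Rpower x (- mu)) with (/ (1 - mu) * ((1 - mu) * Rpower x (1 - mu - 1)))
      by (replace (1 - mu - 1) with (- mu) by ring; field; lra).
    apply (is_derive_scal (fun s => Rpower s (1 - mu))). apply is_derive_Rpower. lra.
  - intros x Hx. apply continuous_Rpower. lra.
Qed.

Definition gamma_kernel (mu s : R) : R := Rpower s (- mu) * exp (- s).

Lemma gamma_kernel_pos (mu s : R) : 0 < gamma_kernel mu s.
Proof. apply Rmult_lt_0_compat; [apply Rpower_pos | apply exp_pos]. Qed.

Lemma ex_RInt_gamma_kernel (mu a b : R) : 0 < a -> 0 < b -> ex_RInt (gamma_kernel mu) a b.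
Proof.
  intros Ha Hb. apply ex_RInt_continuous_R. intros x Hx.
  assert (Hx0 : 0 < x) by (assert (0 < Rmin a b) by (apply Rmin_glb_lt; assumption); lra).
  apply (continuous_mult (K := R_AbsRing) (fun t => Rpower t (- mu)) (fun t => exp (- t))).
  - apply continuous_Rpower, Hx0.
  - apply ex_derive_continuous_R. auto_derive. exact I.
Qed.

Lemma RInt_gamma_kernel_ge0 (mu a b : R) : 0 < a <= b -> 0 <= RInt (gamma_kernel mu) a b.
Proof.
  intros Hab. apply RInt_ge_0; [lra | apply ex_RInt_gamma_kernel; lra |].
  intros x _. apply Rlt_le, gamma_kernel_pos.
Qed.

Lemma RInt_gamma_kernel_le_Rpower (mu a b : R) : mu < 1 -> 0 < a <= b ->
  RInt (gamma_kernel mu) a b <= (Rpower b (1 - mu) - Rpower a (1 - mu)) / (1 - mu).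
Proof.
  intros Hmu Hab.
  rewrite <- (is_RInt_unique _ _ _ _ (is_RInt_Rpower_opp mu a b Hmu ltac:(lra) ltac:(lra))).
  apply RInt_le; [lra | apply ex_RInt_gamma_kernel; lra | eexists; apply is_RInt_Rpower_opp; lra |].
  intros x Hx. unfold gamma_kernel. assert (H1 := Rpower_pos x (- mu)).
  assert (H2 := exp_opp_le_1 x ltac:(lra)).
  nra.
Qed.

Lemma RInt_gamma_kernel_le_exp (mu a b : R) : 0 <= mu -> 1 <= a <= b ->
  RInt (gamma_kernel mu) a b <= exp (- a) - exp (- b).
Proof.
  intros Hmu Hab. rewrite <- (is_RInt_unique _ _ _ _ (is_RInt_exp_opp a b)).
  apply RInt_le; [lra | apply ex_RInt_gamma_kernel; lra | eexists; apply is_RInt_exp_opp |].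
  intros x Hx. unfold gamma_kernel. assert (H1 := Rpower_opp_le_1 x mu ltac:(lra) Hmu).
  assert (H2 := exp_pos (- x)). nra.
Qed.

Lemma RInt_gamma_kernel_ge (mu a b : R) : 0 <= mu -> 0 < a <= b ->
  Rpower b (- mu) * (exp (- a) - exp (- b)) <= RInt (gamma_kernel mu) a b.
Proof.
  intros Hmu Hab.
  assert (Hint : is_RInt (fun s => Rpower b (- mu) * exp (- s)) a b
                   (Rpower b (- mu) * (exp (- a) - exp (- b))))
    by exact (is_RInt_scal (V := R_NormedModule) _ a b _ _ (is_RInt_exp_opp a b)).
  rewrite <- (is_RInt_unique _ _ _ _ Hint).
  apply RInt_le; [lra | eexists; exact Hint | apply ex_RInt_gamma_kernel; lra |].
  intros x Hx. unfold gamma_kernel.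
  assert (H1 := Rpower_opp_le x b mu ltac:(lra) Hmu). assert (H2 := exp_pos (- x)). nra.
Qed.

Lemma ex_RInt_gen_gamma_kernel_p_infty (mu : R) : 0 <= mu ->
  ex_RInt_gen (gamma_kernel mu) (at_point 1) (Rbar_locally p_infty).
Proof.
  intros Hmu. apply ex_RInt_gen_p_infty_nonneg with 1.
  - intros b Hb. apply ex_RInt_gamma_kernel; lra.
  - intros x _. apply Rlt_le, gamma_kernel_pos.
  - intros b Hb. eapply Rle_trans; [apply RInt_gamma_kernel_le_exp; lra |].
    assert (H1 := exp_opp_le_1 1 ltac:(lra)).
    assert (H := exp_pos (- b)). lra.
Qed.

Definition Gamma_upper (mu h : R) : R :=
  RInt_gen (gamma_kernel mu) (at_point h) (Rbar_locally p_infty).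

Lemma is_RInt_gen_Gamma_upper (mu h : R) : 0 <= mu -> 0 < h ->
  is_RInt_gen (gamma_kernel mu) (at_point h) (Rbar_locally p_infty) (Gamma_upper mu h).
Proof.
  intros Hmu Hh. apply (RInt_gen_correct (V := R_CompleteNormedModule)).
  apply (ex_RInt_gen_Chasles _ 1).
  - apply ex_RInt_gen_at_point, ex_RInt_gamma_kernel; lra.
  - apply ex_RInt_gen_gamma_kernel_p_infty, Hmu.
Qed.

Lemma Gamma_upper_ge (mu h : R) : 0 <= mu -> 0 < h ->
  Rpower (h + 1) (- mu) * (exp (- h) - exp (- (h + 1))) <= Gamma_upper mu h.
Proof.
  intros Hmu Hh.
  apply (is_RInt_gen_ge (Fa := at_point h) (Fb := Rbar_locally p_infty) (gamma_kernel mu));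
    [| apply is_RInt_gen_Gamma_upper; assumption].
  apply Filter_prod with (fun x => x = h) (fun b => h + 1 < b); [reflexivity | exists (h + 1); auto |].
  intros x b -> Hb y Hy. simpl in Hy. rewrite <- (is_RInt_unique _ _ _ _ Hy).
  rewrite <- (RInt_Chasles (V := R_CompleteNormedModule) _ h (h + 1) b)
    by (apply ex_RInt_gamma_kernel; lra).
  assert (H1 := RInt_gamma_kernel_ge mu h (h + 1) Hmu ltac:(lra)).
  assert (H2 := RInt_gamma_kernel_ge0 mu (h + 1) b ltac:(lra)).
  unfold plus; simpl. lra.
Qed.

Lemma Gamma_split (mu h : R) : 0 < mu < 1 -> 0 < h ->
  exists lo, 0 <= lo <= Rpower h (1 - mu) / (1 - mu) /\ Gamma (1 - mu) = lo + Gamma_upper mu h.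
Proof.
  intros Hmu Hh. set (K := Rpower h (1 - mu) / (1 - mu)).
  assert (Hbound : forall a, 0 < a <= h -> 0 <= RInt (gamma_kernel mu) a h <= K).
  { intros a Ha. split; [apply RInt_gamma_kernel_ge0; lra |].
    eapply Rle_trans; [apply RInt_gamma_kernel_le_Rpower; lra |].
    assert (Hpa := Rpower_pos a (1 - mu)). unfold K, Rdiv.
    apply Rmult_le_compat_r; [apply Rlt_le, Rinv_0_lt_compat |]; lra. }
  assert (Hlo : is_RInt_gen (gamma_kernel mu) (at_right 0) (at_point h)
                  (RInt_gen (gamma_kernel mu) (at_right 0) (at_point h))).
  { apply (RInt_gen_correct (V := R_CompleteNormedModule)), (ex_RInt_gen_at_right_nonneg _ 0 h K Hh).
    - intros a Ha. apply ex_RInt_gamma_kernel; lra.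
    - intros x _. apply Rlt_le, gamma_kernel_pos.
    - intros a Ha. apply Hbound, Ha. }
  assert (Hwindow : filter_prod (at_right 0) (at_point h)
             (fun ab => forall y, is_RInt (gamma_kernel mu) (fst ab) (snd ab) y -> 0 <= y <= K)).
  { apply Filter_prod with (fun x => 0 < x < h) (fun b => b = h); [| reflexivity |].
    - exists (mkposreal h Hh). intros x Hx Hx0.
      change (Rabs (x - 0) < h) in Hx. rewrite Rminus_0_r, Rabs_pos_eq in Hx by lra. lra.
    - intros a x Ha -> y Hy. simpl in Hy. rewrite <- (is_RInt_unique _ _ _ _ Hy). apply Hbound. lra. }
  eexists. split; [split |].
  - refine (is_RInt_gen_ge _ _ _ _ Hlo). refine (filter_imp _ _ _ Hwindow).
    intros ab Hab y Hy. apply Hab, Hy.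
  - refine (is_RInt_gen_le _ _ _ _ Hlo). refine (filter_imp _ _ _ Hwindow).
    intros ab Hab y Hy. apply Hab, Hy.
  - unfold Gamma. replace (1 - mu - 1) with (- mu) by ring. fold (gamma_kernel mu).
    apply is_RInt_gen_unique, (is_RInt_gen_Chasles _ h _ _ Hlo), is_RInt_gen_Gamma_upper; lra.
Qed.

Lemma filterlim_Gamma_upper (mu : R) : 0 < mu < 1 ->
  filterlim (Gamma_upper mu) (at_right 0) (locally (Gamma (1 - mu))).
Proof.
  intros Hmu P [eps Heps].
  assert (Hpos : at_right 0 (fun h => 0 < h)) by (exists (mkposreal 1 Rlt_0_1); auto).
  assert (Hsmall := Rpower_lt_near_0 (1 - mu) (eps * (1 - mu)) ltac:(lra)
                      ltac:(apply Rmult_lt_0_compat; [apply cond_pos | lra])).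
  refine (filter_imp _ _ _ (filter_and _ _ Hpos Hsmall)). intros h [Hh Hsm].
  apply Heps. change (Rabs (Gamma_upper mu h - Gamma (1 - mu)) < eps).
  destruct (Gamma_split mu h Hmu Hh) as [lo [Hlo ->]].
  replace (Gamma_upper mu h - (lo + Gamma_upper mu h)) with (- lo) by ring.
  rewrite Rabs_Ropp, Rabs_pos_eq by lra.
  apply (Rle_lt_trans _ _ _ (proj2 Hlo)). apply Rlt_div_l; lra.
Qed.

(** * The Laplace transform of Phi *)

Definition Phi_tail (mu h a : R) : R := Rpower (1 + a) (- mu) * exp (- (a * h)).

Lemma is_derive_Phi_tail (mu h a : R) : -1 < a ->
  is_derive (fun x => - Phi_tail mu h x) a (Phi mu a * exp (- (a * h)) + h * Phi_tail mu h a).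
Proof.
  intros Ha. unfold Phi_tail, Phi, Rpower. auto_derive; [lra |].
  replace ((-1 - mu) * ln (1 + a)) with (- mu * ln (1 + a) + - ln (1 + a)) by ring.
  rewrite exp_plus, (exp_Ropp (ln (1 + a))), exp_ln by lra. field. lra.
Qed.

Lemma continuous_Phi_exp_plus_tail (mu h a : R) : -1 < a ->
  continuous (fun x => Phi mu x * exp (- (x * h)) + h * Phi_tail mu h x) a.
Proof.
  intros Ha. apply ex_derive_continuous_R.
  unfold Phi_tail, Phi, Rpower. auto_derive. lra.
Qed.

Lemma locally_gt (c x : R) : c < x -> locally x (fun y => c < y).
Proof.
  intros Hcx. assert (Hd : 0 < x - c) by lra. exists (mkposreal _ Hd). intros y Hy.
  change (Rabs (y - x) < x - c) in Hy. apply Rabs_lt_between in Hy. lra.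
Qed.

Lemma filterlim_Phi_tail (mu h : R) : 0 < mu -> 0 <= h ->
  filterlim (Phi_tail mu h) (Rbar_locally p_infty) (locally 0).
Proof.
  intros Hmu Hh P [eps HP]. set (M := Rpower (/ eps) (/ mu)).
  assert (HM := Rpower_pos (/ eps) (/ mu)). fold M in HM.
  exists M. intros a Ha. apply HP. change (Rabs (Phi_tail mu h a - 0) < eps).
  assert (Htail : 0 < Phi_tail mu h a) by (apply Rmult_lt_0_compat; [apply Rpower_pos | apply exp_pos]).
  rewrite Rminus_0_r, Rabs_pos_eq by lra.
  assert (Hexp := exp_opp_le_1 (a * h) ltac:(apply Rmult_le_pos; lra)).
  assert (Hpow : Rpower (1 + a) (- mu) < eps).
  { assert (Heps := cond_pos eps).
    rewrite Rpower_Ropp. replace (pos eps) with (/ Rpower M mu).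
    - apply Rinv_lt_contravar; [apply Rmult_lt_0_compat; apply Rpower_pos |].
      apply Rlt_Rpower_l; lra.
    - unfold M. rewrite Rpower_mult, Rinv_l, Rpower_1 by (try apply Rinv_0_lt_compat; lra).
      apply Rinv_inv. }
  unfold Phi_tail. assert (H0 := Rpower_pos (1 + a) (- mu)). nra.
Qed.

Lemma is_RInt_gen_Phi_exp_plus_tail (mu h : R) : 0 < mu -> 0 <= h ->
  is_RInt_gen (fun a => Phi mu a * exp (- (a * h)) + h * Phi_tail mu h a)
    (at_point 0) (Rbar_locally p_infty) 1.
Proof.
  intros Hmu Hh. set (F := fun x => - Phi_tail mu h x).
  assert (Hwindow : forall Q : R -> Prop, (forall x, -1 < x -> Q x) ->
            filter_prod (at_point 0) (Rbar_locally p_infty)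
              (fun ab => forall x, Rmin (fst ab) (snd ab) <= x <= Rmax (fst ab) (snd ab) -> Q x)).
  { intros Q HQ.
    apply Filter_prod with (fun x => x = 0) (fun b => 0 < b); [reflexivity | exists 0; auto |].
    intros x b -> Hb y Hy. simpl in Hy. rewrite Rmin_left, Rmax_right in Hy by lra. apply HQ. lra. }
  apply (is_RInt_gen_ext (Derive F)).
  - refine (filter_imp _ _ _
      (Hwindow _ (fun x Hx => is_derive_unique _ _ _ (is_derive_Phi_tail mu h x Hx)))).
    intros [a b] Hab x Hx. apply Hab. simpl in *. lra.
  - replace 1 with (0 - F 0)
      by (unfold F, Phi_tail; rewrite Rplus_0_r, Rpower_1_base, Rmult_0_l, Ropp_0, exp_0; ring).
    apply is_RInt_gen_Derive.
    + apply Hwindow. intros x Hx. eexists. apply is_derive_Phi_tail, Hx.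
    + apply Hwindow. intros x Hx.
      apply (continuous_ext_loc _ (fun y => Phi mu y * exp (- (y * h)) + h * Phi_tail mu h y)).
      * generalize (locally_gt (-1) x Hx). apply filter_imp. intros y Hy.
        symmetry. apply is_derive_unique, is_derive_Phi_tail, Hy.
      * apply continuous_Phi_exp_plus_tail, Hx.
    + intros P HP. exact (locally_singleton _ _ HP).
    + replace (locally 0) with (locally (opp 0)) by (f_equal; unfold opp; simpl; ring).
      apply (filterlim_comp _ _ _ (Phi_tail mu h) opp _ (locally 0));
        [apply filterlim_Phi_tail; assumption | apply (filterlim_opp (V := R_NormedModule))].
Qed.

Lemma is_RInt_gen_Phi_tail (mu h : R) : 0 <= mu -> 0 < h ->
  is_RInt_gen (fun a => h * Phi_tail mu h a) (at_point 0) (Rbar_locally p_infty)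
    (Rpower h mu * exp h * Gamma_upper mu h).
Proof.
  intros Hmu Hh. set (C := Rpower h mu * exp h).
  (* substituting s = h (1 + a) *)
  assert (Hsub : is_RInt_gen (fun a => h * gamma_kernel mu (h * a + h))
                   (at_point 0) (Rbar_locally p_infty) (Gamma_upper mu h)).
  { apply (is_RInt_gen_comp_lin (Fa := at_point (h * 0 + h)) (Fb := Rbar_locally p_infty)).
    - apply filterlim_affine_at_point.
    - apply filterlim_affine_p_infty, Hh.
    - rewrite Rmult_0_r, Rplus_0_l. apply is_RInt_gen_Gamma_upper; assumption. }
  apply (is_RInt_gen_scal (V := R_NormedModule) _ C) in Hsub.
  refine (is_RInt_gen_ext _ _ _ _ Hsub).
  apply Filter_prod with (fun x => x = 0) (fun b => 0 < b); [reflexivity | exists 0; auto |].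
  intros x b -> Hb a Ha. simpl in Ha. rewrite Rmin_left, Rmax_right in Ha by lra.
  unfold C, gamma_kernel, Phi_tail, scal; simpl; unfold mult; simpl.
  replace (h * a + h) with (h * (1 + a)) by ring.
  rewrite <- Rpower_mult_distr, Rpower_Ropp by lra.
  replace (- (h * (1 + a))) with (- h + - (a * h)) by ring.
  rewrite exp_plus, exp_Ropp. field.
  split; apply Rgt_not_eq; [apply exp_pos | apply Rpower_pos].
Qed.

Lemma is_RInt_gen_Phi_exp (mu h : R) : 0 < mu -> 0 < h ->
  is_RInt_gen (fun a => Phi mu a * exp (- (a * h))) (at_point 0) (Rbar_locally p_infty)
    (1 - Rpower h mu * exp h * Gamma_upper mu h).
Proof.
  intros Hmu Hh.
  assert (Hdiff := is_RInt_gen_minus (V := R_NormedModule)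
                     (Fa := at_point 0) (Fb := Rbar_locally p_infty) _ _ _ _
                     (is_RInt_gen_Phi_exp_plus_tail mu h Hmu ltac:(lra))
                     (is_RInt_gen_Phi_tail mu h ltac:(lra) Hh)).
  refine (is_RInt_gen_ext _ _ _ _ Hdiff).
  apply filter_forall. intros ab x _. unfold minus, plus, opp; simpl. ring.
Qed.

Lemma is_RInt_gen_Phi (mu : R) : 0 < mu ->
  is_RInt_gen (fun a => Phi mu a * exp (- (a * 0))) (at_point 0) (Rbar_locally p_infty) 1.
Proof.
  intros Hmu. refine (is_RInt_gen_ext _ _ _ _ (is_RInt_gen_Phi_exp_plus_tail mu 0 Hmu (Rle_refl 0))).
  apply filter_forall. intros ab x _. rewrite Rmult_0_l. apply Rplus_0_r.
Qed.

(** * Asymptotics of H *)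

Lemma gauss_exponent_pos (sigma p : R) : sigma <> 0 -> p <> 0 -> 0 < sigma ^ 2 * p ^ 2 / 2.
Proof.
  intros Hs Hp. assert (0 < sigma ^ 2) by (apply pow2_gt_0, Hs).
  assert (0 < p ^ 2) by (apply pow2_gt_0, Hp). nra.
Qed.

Lemma H_equation_pos_solution (mu sigma p h : R) : 0 < mu < 1 -> 0 < sigma -> p <> 0 ->
  H_equation mu sigma p h ->
  0 < h /\ Rpower h mu * exp h * Gamma_upper mu h = 1 - exp (- (sigma ^ 2 * p ^ 2 / 2)).
Proof.
  intros Hmu Hs Hp [Hh0 [I1 [I2 [HI1 [HI2 HI]]]]].
  assert (Hx := gauss_exponent_pos sigma p (Rgt_not_eq _ _ Hs) Hp).
  assert (E2 := is_RInt_gen_R_unique _ _ _ HI2 (is_RInt_gen_omega_exp sigma p Hs)).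
  assert (E1 : I1 = exp (- (sigma ^ 2 * p ^ 2 / 2))).
  { rewrite E2 in HI. rewrite exp_Ropp. assert (H := exp_pos (sigma ^ 2 * p ^ 2 / 2)).
    apply (Rmult_eq_reg_r (exp (sigma ^ 2 * p ^ 2 / 2))); [rewrite HI, Rinv_l |]; lra. }
  assert (Hh : 0 < h).
  { destruct Hh0 as [Hh | <-]; [exact Hh |].
    rewrite (is_RInt_gen_R_unique _ _ _ HI1 (is_RInt_gen_Phi mu ltac:(lra))) in E1.
    assert (H := exp_opp_lt_1 _ Hx). lra. }
  split; [exact Hh |].
  rewrite (is_RInt_gen_R_unique _ _ _ HI1 (is_RInt_gen_Phi_exp mu h ltac:(lra) Hh)) in E1.
  lra.
Qed.

Lemma Gamma_upper_scaled_ge (mu h : R) : 0 <= mu -> 0 < h ->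
  Rpower (h / (h + 1)) mu * (1 - exp (- (1))) <= Rpower h mu * exp h * Gamma_upper mu h.
Proof.
  intros Hmu Hh.
  assert (HC : 0 < Rpower h mu * exp h) by (apply Rmult_lt_0_compat; [apply Rpower_pos | apply exp_pos]).
  eapply Rle_trans; [| apply Rmult_le_compat_l; [lra | apply Gamma_upper_ge; assumption]].
  right. unfold Rdiv. rewrite <- Rpower_mult_distr by (try apply Rinv_0_lt_compat; lra).
  rewrite Rpower_inv_base, Rpower_Ropp by lra.
  replace (exp (- (h + 1))) with (exp (- h) * exp (- (1))) by (rewrite <- exp_plus; f_equal; ring).
  rewrite (exp_Ropp h). field.
  assert (Hp := Rpower_pos (h + 1) mu). assert (He := exp_pos h). split; lra.
Qed.

Lemma filterlim_H_at_right (mu sigma : R) (H : R -> R) : 0 < mu < 1 -> 0 < sigma ->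
  (forall p, H_equation mu sigma p (H p)) -> filterlim H (Rbar_locally' 0) (at_right 0).
Proof.
  intros Hmu Hs Hsol P [eta HP]. assert (Heta0 := cond_pos eta).
  set (c := Rpower (eta / (eta + 1)) mu * (1 - exp (- (1)))).
  assert (He1 := exp_opp_lt_1 1 Rlt_0_1).
  assert (Hc : 0 < c) by (apply Rmult_lt_0_compat; [apply Rpower_pos | lra]).
  assert (Hs2 : 0 < sigma ^ 2) by (apply pow_lt; lra).
  assert (Hd : 0 < Rmin 1 (2 * c / sigma ^ 2))
    by (apply Rmin_glb_lt; [lra | apply Rdiv_lt_0_compat; lra]).
  exists (mkposreal _ Hd). intros p Hp Hp0.
  change (Rabs (p - 0) < Rmin 1 (2 * c / sigma ^ 2)) in Hp. rewrite Rminus_0_r in Hp.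
  destruct (H_equation_pos_solution mu sigma p (H p) Hmu Hs Hp0 (Hsol p)) as [Hh HE].
  (* |p| < 1 turns |p| < 2c/sigma^2 into p^2 < 2c/sigma^2 *)
  assert (Hx : sigma ^ 2 * p ^ 2 / 2 < c).
  { assert (Hp1 := Rlt_le_trans _ _ _ Hp (Rmin_l _ _)).
    assert (Hp2 := Rlt_le_trans _ _ _ Hp (Rmin_r _ _)).
    assert (Hpp : p ^ 2 = Rabs p * Rabs p) by (rewrite <- Rabs_mult, Rabs_pos_eq; [ring | nra]).
    assert (p ^ 2 < 2 * c / sigma ^ 2) by (assert (0 <= Rabs p) by apply Rabs_pos; nra).
    apply (Rmult_lt_compat_l (sigma ^ 2)) in H0; [| lra].
    replace (sigma ^ 2 * (2 * c / sigma ^ 2)) with (2 * c) in H0 by (field; lra). lra. }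
  assert (Hexp := exp_ineq1_le (- (sigma ^ 2 * p ^ 2 / 2))).
  assert (Hlow := Gamma_upper_scaled_ge mu (H p) ltac:(lra) Hh).
  apply HP; [| exact Hh]. change (Rabs (H p - 0) < eta). rewrite Rminus_0_r, Rabs_pos_eq by lra.
  apply Rnot_le_lt. intros Heta.
  assert (Rpower (eta / (eta + 1)) mu <= Rpower (H p / (H p + 1)) mu).
  { apply Rle_Rpower_l; [lra | split; [apply Rdiv_lt_0_compat; lra |]].
    apply (Rmult_le_reg_r ((eta + 1) * (H p + 1))); [nra |].
    unfold Rdiv. field_simplify; lra. }
  assert (c <= Rpower (H p / (H p + 1)) mu * (1 - exp (- (1)))).
  { unfold c. apply Rmult_le_compat_r; [lra | assumption]. }
  lra.
Qed.

Lemma Gamma_pos (mu : R) : 0 < mu < 1 -> 0 < Gamma (1 - mu).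
Proof.
  intros Hmu. destruct (Gamma_split mu 1 Hmu Rlt_0_1) as [lo [Hlo ->]].
  assert (Hup := Gamma_upper_ge mu 1 ltac:(lra) Rlt_0_1).
  assert (0 < Rpower (1 + 1) (- mu) * (exp (- (1)) - exp (- (1 + 1)))); [| lra].
  apply Rmult_lt_0_compat; [apply Rpower_pos |].
  assert (exp (- (1 + 1)) < exp (- (1))) by (apply exp_increasing; lra). lra.
Qed.

Lemma is_lim_one_minus_exp_opp_div (g : R -> R) (x : Rbar) :
  is_lim g x 0 -> Rbar_locally' x (fun y => g y <> 0) ->
  is_lim (fun y => (1 - exp (- g y)) / g y) x 1.
Proof.
  intros Hg Hg0.
  apply (is_lim_ext_loc (fun y => (exp (- g y) - 1) / (- g y))).
  { generalize Hg0. apply filter_imp. intros y Hy. field. exact Hy. }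
  apply (is_lim_comp (fun y => (exp y - 1) / y) (fun y => - g y) x 1 0).
  - apply is_lim_div_expm1_0.
  - replace (Finite 0) with (Rbar_opp 0) by (simpl; f_equal; ring). apply is_lim_opp, Hg.
  - generalize Hg0. apply filter_imp. intros y Hy E. injection E. intros E'. apply Hy. lra.
Qed.

Lemma is_lim_gauss_exponent (sigma : R) : is_lim (fun p => sigma ^ 2 * p ^ 2 / 2) 0 0.
Proof.
  assert (Hc : continuity_pt (fun p => sigma ^ 2 * p ^ 2 / 2) 0).
  { apply continuity_pt_filterlim, (ex_derive_continuous_R (fun p => sigma ^ 2 * p ^ 2 / 2)).
    auto_derive. exact I. }
  apply is_lim_continuity in Hc. cbv beta in Hc.
  replace (sigma ^ 2 * 0 ^ 2 / 2) with 0 in Hc by (simpl; field). exact Hc.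
Qed.

Lemma is_lim_H_scaled (mu sigma : R) (H : R -> R) : 0 < mu < 1 -> 0 < sigma ->
  (forall p, H_equation mu sigma p (H p)) ->
  is_lim (fun p => Rpower (H p) mu * (2 * Gamma (1 - mu)) / (sigma * p) ^ 2) 0 1.
Proof.
  intros Hmu Hs Hsol. set (G := Gamma (1 - mu)). assert (HG : 0 < G) by apply Gamma_pos, Hmu.
  assert (HH := filterlim_H_at_right mu sigma H Hmu Hs Hsol).
  assert (Hexp : is_lim (fun p => exp (H p)) 0 1).
  { rewrite <- exp_0. apply is_lim_comp_continuous.
    - exact (filterlim_filter_le_2 _ (filter_le_within _) HH).
    - apply ex_derive_continuous_R. auto_derive. exact I. }
  assert (Hup : is_lim (fun p => Gamma_upper mu (H p)) 0 G)
    by exact (filterlim_comp _ _ _ H (Gamma_upper mu) _ _ _ HH (filterlim_Gamma_upper mu Hmu)).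
  assert (Hratio := is_lim_one_minus_exp_opp_div _ 0 (is_lim_gauss_exponent sigma)).
  apply (is_lim_ext_loc (fun p => (1 - exp (- (sigma ^ 2 * p ^ 2 / 2))) / (sigma ^ 2 * p ^ 2 / 2)
                                   * (G / (exp (H p) * Gamma_upper mu (H p))))).
  - exists (mkposreal 1 Rlt_0_1). intros p _ Hp.
    destruct (H_equation_pos_solution mu sigma p (H p) Hmu Hs Hp (Hsol p)) as [Hh HE].
    assert (Hx := gauss_exponent_pos sigma p (Rgt_not_eq _ _ Hs) Hp).
    assert (Hpos := Rpower_pos (H p) mu). assert (He := exp_pos (H p)).
    assert (HC : 0 < Rpower (H p) mu * exp (H p)) by (apply Rmult_lt_0_compat; assumption).
    assert (Hg : 0 < Gamma_upper mu (H p)).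
    { assert (H1 := exp_opp_lt_1 _ Hx).
      apply (Rmult_lt_reg_l (Rpower (H p) mu * exp (H p))); [exact HC |].
      rewrite Rmult_0_r, HE. lra. }
    rewrite <- HE. field. repeat split; [exact Hp | lra | lra | lra].
  - replace (Finite 1) with (Rbar_mult 1 (Rbar_div G (Rbar_mult 1 G))) by (simpl; f_equal; field; lra).
    apply is_lim_mult; [| apply is_lim_div |].
    + apply Hratio. exists (mkposreal 1 Rlt_0_1). intros p _ Hp.
      apply Rgt_not_eq, gauss_exponent_pos; lra.
    + apply is_lim_const.
    + apply is_lim_mult; [exact Hexp | exact Hup | exact I].
    + simpl. intros E. injection E. lra.
    + exact I.
    + exact I.
Qed.

Lemma Rpower_root_ratio (h c g mu : R) : 0 < h -> 0 < c -> 0 < g -> 0 < mu ->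
  h / (Rpower c (1 / mu) * Rpower g (- (1 / mu))) = Rpower (Rpower h mu * g / c) (1 / mu).
Proof.
  intros Hh Hc Hg Hmu. set (a := 1 / mu).
  assert (Ha : mu * a = 1) by (unfold a; field; lra).
  assert (Hhm := Rpower_pos h mu).
  unfold Rdiv.
  rewrite <- (Rpower_mult_distr (Rpower h mu * g) (/ c)) by (try apply Rinv_0_lt_compat; nra).
  rewrite <- (Rpower_mult_distr (Rpower h mu) g), Rpower_inv_base, Rpower_mult, Ha, Rpower_1, Rpower_Ropp
    by lra.
  assert (Hc' := Rpower_pos c a). assert (Hg' := Rpower_pos g a).
  field. split; lra.
Qed.

Theorem proposition2 (mu sigma : R) (H : R -> R) :
  0 < mu < 1 -> 0 < sigma ->
  (forall p : R, H_equation mu sigma p (H p)) ->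
  (forall p h : R, H_equation mu sigma p h -> h = H p) ->
  is_lim
    (fun p => H p / (Rpower ((sigma * p) ^ 2) (1 / mu) * Rpower (2 * Gamma (1 - mu)) (- (1 / mu))))
    0 1.
Proof.
  intros Hmu Hs Hsol _.
  apply (is_lim_ext_loc
           (fun p => Rpower (Rpower (H p) mu * (2 * Gamma (1 - mu)) / (sigma * p) ^ 2) (1 / mu))).
  - exists (mkposreal 1 Rlt_0_1). intros p _ Hp.
    destruct (H_equation_pos_solution mu sigma p (H p) Hmu Hs Hp (Hsol p)) as [Hh _].
    assert (HG := Gamma_pos mu Hmu).
    symmetry. apply Rpower_root_ratio; [exact Hh | | lra | lra].
    apply pow2_gt_0, Rmult_integral_contrapositive_currified; lra.
  - replace (Finite 1) with (Finite (Rpower 1 (1 / mu))) by (rewrite Rpower_1_base; reflexivity).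
    apply (is_lim_comp_continuous _ (fun y => Rpower y (1 / mu)) 0 1);
      [apply is_lim_H_scaled; assumption | apply continuous_Rpower; lra].
Qed.
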